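(* With the following design of $F_A(x)=C_A(x)+S_A(x)$ and $F_B(x)=C_B(x)+S_B(x)$ in PolyDot-CMPC, the conditions C1, C2, C3 below are satisfied: $$F_A(x)=\begin{cases}F_{A_1}(x), & z>ts-t \text{ and } s,t\neq 1\\ F_{A_2}(x), & z\le ts-t \text{ or } t=1 \text{ or } s=1\end{cases}$$ $$F_{A_1}(x)=\underbrace{\sum_{i=0}^{t-1}\sum_{j=0}^{s-1}A_{i,j}x^{i+tj}}_{C_A(x)}+\sum_{w=0}^{ts-t-1}\sum_{l=0}^{p-1}\bar A_{(w+\theta' l)}x^{ts+\theta' l+w}+\sum_{u=0}^{z-1-pt(s-1)}\bar A_{(u+t(s-1)+\theta'(p-1))}x^{ts+\theta' p+u},$$ $$F_{A_2}(x)=\sum_{i=0}^{t-1}\sum_{j=0}^{s-1}A_{i,j}x^{i+tj}+\sum_{u=0}^{z-1}\bar A_u x^{ts+\theta' p+u},$$ $$F_B(x)=\begin{cases}F_{B_1}(x), & z>\tau \text{ or } t=1 \text{ or } s=1\\ F_{B_2}(x), & \frac{\tau+1}{2}<z\le\tau \text{ and } s,t\neq1\\ F_{B_3}(x), & z\le\frac{\tau+1}{2} \text{ and } s,t\neq 1\end{cases}$$ $$F_{B_1}(x)=\underbrace{\sum_{k=0}^{s-1}\sum_{l=0}^{t-1}B_{k,l}x^{t(s-1-k)+\theta' l}}_{C_B(x)}+\sum_{r=0}^{z-1}\bar B_r x^{ts+\theta'(t-1)+r},$$ $$F_{B_2}(x)=C_B(x)+\sum_{d=0}^{\tau-z}\sum_{l'=0}^{p'-1}\bar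 B_{(\theta' l'+d)}x^{ts+\theta' l'+d}+\sum_{v=0}^{z-1-p'(\tau-z+1)}\bar B_{(v+\tau-z+1+\theta'(p'-1))}x^{ts+\theta' p'+v},$$ $$F_{B_3}(x)=C_B(x)+\sum_{v=0}^{z-1}\bar B_v x^{ts+v},$$ where $\theta'=t(2s-1)$, $p=\min\{\lfloor\frac{z-1}{ts-t}\rfloor,t-1\}$, $\tau=\theta'-ts-t$, $p'=\min\{\lfloor\frac{z-1}{\tau-z+1}\rfloor,t-1\}$. The conditions are: for all $i,l\in\{0,\dots,t-1\}$, C1: $i+t(s-1)+tl(2s-1)\notin \mathbf{P}(S_A(x))+\mathbf{P}(C_B(x))$; C2: $i+t(s-1)+tl(2s-1)\notin \mathbf{P}(S_A(x))+\mathbf{P}(S_B(x))$; C3: $i+t(s-1)+tl(2s-1)\notin \mathbf{P}(S_B(x))+\mathbf{P}(C_A(x))$.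
   Context: Two sources hold private matrices $A,B\in\mathbb{F}^{m\times m}$ over a finite field $\mathbb{F}$; the goal is to compute $Y=A^TB$ with help of $N$ workers, $z$ of which may collude. Each matrix is split into $s$ row-wise and $t$ column-wise partitions ($s,t\in\mathbb{N}$, $s|m$, $t|m$, excluding $s=t=1$); $A_{i,j}$ ($i\in\{0,\dots,t-1\}$, $j\in\{0,\dots,s-1\}$) are blocks of $A^T$ and $B_{k,l}$ ($k\in\{0,\dots,s-1\}$, $l\in\{0,\dots,t-1\}$) are blocks of $B$. For a polynomial $f(x)=\sum_i a_ix^i$, $\mathbf{P}(f(x))$ is the set of exponents $i$ with $a_i\neq 0$; for integer sets, $\mathbf{A}+\mathbf{B}=\{a+b: a\in\mathbf{A}, b\in\mathbf{B}\}$. The terms $C_A,C_B$ are the PolyDot coded terms and $S_A,S_B$ the secret terms; the exponents $i+t(s-1)+tl(2s-1)$, $i,l\in\{0,\dots,t-1\}$, are the ''important powers'' of $C_A(x)C_B(x)$, whose coefficients $\sum_{j}A_{i,j}B_{j,l}$ form $Y$. The coefficients $\bar A_{(\cdot)}$ are chosen independently and uniformly at random in $\mathbb{F}^{\frac{m}{t}\times\frac{m}{s}}$, and $\bar B_{(\cdot)}$ independently and uniformly at random in $\mathbb{F}^{\frac{m}{s}\times\frac{m}{t}}$. *)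

From HB Require Import structures.
From mathcomp Require Import all_boot all_order all_algebra.
Set Implicit Arguments. Unset Strict Implicit. Unset Printing Implicit Defensive.
Import GRing.Theory.

(* A polynomial with (rectangular) matrix coefficients is represented by its
   coefficient function  nat -> coefficient ; f e is the coefficient of x^e. *)

Definition term (R : zmodType) (k : nat) (M : R) (e : nat) : R :=
  if e == k then M else 0%R.

Definition supp (R : zmodType) (f : nat -> R) (e : nat) : Prop := f e != 0%R.

Definition sumset (P Q : nat -> Prop) (e : nat) : Prop :=
  exists a b, [/\ P a, Q b & (a + b)%N = e].

(* entry (x,y) of M, or 0 if out of range *)
Definition mget (R : zmodType) (m n : nat) (M : 'M[R]_(m, n)) (x y : nat) : R :=
  match (insub x : option 'I_m), (insub y : option 'I_n) with
  | Some x', Some y' => M x' y'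
  | _, _ => 0%R
  end.

Definition blk (R : zmodType) (m n r c : nat) (M : 'M[R]_(m, n)) (i j : nat)
  : 'M[R]_(r, c) := \matrix_(a < r, b < c) mget M (i * r + a) (j * c + b).

Definition Ablk (R : zmodType) (m s t : nat) (A : 'M[R]_m) (i j : nat) :=
  blk (m %/ t) (m %/ s) (trmx A) i j.
Definition Bblk (R : zmodType) (m s t : nat) (B : 'M[R]_m) (k l : nat) :=
  blk (m %/ s) (m %/ t) B k l.

Definition theta' (s t : nat) : nat := t * (2 * s - 1).
(* p = min(floor((z-1)/(ts-t)), t-1); when ts - t = 0 (s = 1) the quotient is
   read as +infinity, so p = t-1 *)
Definition pA (s t z : nat) : nat :=
  if (t * s - t == 0)%N then (t - 1)%N
  else minn ((z - 1) %/ (t * s - t)) (t - 1).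
(* tau = theta' - ts - t (only used, and exact, when s >= 2) *)
Definition tau (s t : nat) : nat := (theta' s t - t * s - t)%N.
Definition pB (s t z : nat) : nat :=
  minn ((z - 1) %/ (tau s t - z + 1)) (t - 1).

Definition CA (R : zmodType) (m s t : nat) (A : 'M[R]_m) (e : nat) :=
  (\sum_(i < t) \sum_(j < s) term (i + t * j)%N (Ablk s t A i j) e)%R.
Definition CB (R : zmodType) (m s t : nat) (B : 'M[R]_m) (e : nat) :=
  (\sum_(k < s) \sum_(l < t)
      term (t * (s - 1 - k) + theta' s t * l)%N (Bblk s t B k l) e)%R.

Definition SA1 (R : zmodType) (s t z : nat) (Abar : nat -> R) (e : nat) : R :=
  let th := theta' s t in let p := pA s t z in
  (\sum_(w < (t * s - t)%N) \sum_(l < p)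
       term (t * s + th * l + w)%N (Abar (w + th * l)%N) e
   + \sum_(u < (z - p * t * (s - 1))%N)
       term (t * s + th * p + u)%N (Abar (u + t * (s - 1) + th * (p - 1))%N) e)%R.
Definition SA2 (R : zmodType) (s t z : nat) (Abar : nat -> R) (e : nat) : R :=
  (\sum_(u < z) term (t * s + theta' s t * pA s t z + u)%N (Abar u) e)%R.
Definition SA (R : zmodType) (s t z : nat) (Abar : nat -> R) : nat -> R :=
  if [&& (t * s - t < z)%N, s != 1%N & t != 1%N] then SA1 s t z Abar
  else SA2 s t z Abar.

Definition SB1 (R : zmodType) (s t z : nat) (Bbar : nat -> R) (e : nat) : R :=
  (\sum_(r < z) term (t * s + theta' s t * (t - 1) + r)%N (Bbar r) e)%R.
Definition SB2 (R : zmodType) (s t z : nat) (Bbar : nat -> R) (e : nat) : R :=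
  let th := theta' s t in let p' := pB s t z in let ta := tau s t in
  (\sum_(d < (ta - z + 1)%N) \sum_(l' < p')
       term (t * s + th * l' + d)%N (Bbar (th * l' + d)%N) e
   + \sum_(v < (z - p' * (ta - z + 1))%N)
       term (t * s + th * p' + v)%N (Bbar (v + ta - z + 1 + th * (p' - 1))%N) e)%R.
Definition SB3 (R : zmodType) (s t z : nat) (Bbar : nat -> R) (e : nat) : R :=
  (\sum_(v < z) term (t * s + v)%N (Bbar v) e)%R.

Definition SB (R : zmodType) (s t z : nat) (Bbar : nat -> R) : nat -> R :=
  if [|| (tau s t < z)%N, s == 1%N | t == 1%N] then SB1 s t z Bbar
  else if (tau s t + 1 < 2 * z)%N then SB2 s t z Bbar
  else SB3 s t z Bbar.

Definition FA (R : zmodType) (m s t z : nat) (A : 'M[R]_m)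
  (Abar : nat -> 'M[R]_(m %/ t, m %/ s)) (e : nat) := (CA s t A e + SA s t z Abar e)%R.
Definition FB (R : zmodType) (m s t z : nat) (B : 'M[R]_m)
  (Bbar : nat -> 'M[R]_(m %/ s, m %/ t)) (e : nat) := (CB s t B e + SB s t z Bbar e)%R.

Definition imp_pow (s t i l : nat) : nat := (i + t * (s - 1) + t * l * (2 * s - 1))%N.

From HB Require Import structures.
From mathcomp Require Import all_boot all_order all_algebra.
From mathcomp Require Import zify.
Set Implicit Arguments. Unset Strict Implicit. Unset Printing Implicit Defensive.
Import GRing.Theory.

(* With theta = theta' = 2ts - t, every important power is
   theta l + (ts - t + i) with i < t: modulo theta it lies in the window
   [ts - t, ts), and it is below ts + theta (t - 1).  Apart from exponents
   beyond that bound, the secret terms only use exponents ts + theta q + w with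
   a small offset (w < min(z, ts - t) for S_A, w + z <= ts - 2t for S_B), while
   C_B uses c + theta q with c <= ts - t and C_A uses exponents below ts.
   In each of the three sumsets the total offset beyond a multiple of theta
   therefore lies in [ts, theta + ts - t), which misses the window. *)

Section SupportOfSums.

Variable R : zmodType.

Lemma sumr_neq0 (I : finType) (F : I -> R) :
  (\sum_i F i != 0)%R -> exists i, (F i != 0)%R.
Proof.
move=> sum_neq0; apply/existsP; apply: contraNT sum_neq0 => /existsPn F0.
by apply/eqP/big1 => i _; apply/eqP/negbNE/F0.
Qed.

Lemma addr_neq0 (a b : R) : (a + b != 0)%R -> (a != 0)%R \/ (b != 0)%R.
Proof. by case: (eqVneq a 0%R) => [->|]; [rewrite add0r; right | left]. Qed.

Lemma term_neq0 k (M : R) e : (term k M e != 0)%R -> e = k.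
Proof. by rewrite /term; case: (eqVneq e k) => // _; rewrite eqxx. Qed.

End SupportOfSums.

Lemma sub_divn_pred_leq z d : 0 < d -> z - (z - 1) %/ d * d <= d.
Proof. by move=> d_gt0; have := ltn_ceil (z - 1) d_gt0; lia. Qed.

Lemma window_neq d a b x y q l :
  a <= y < b -> b <= x < d + a -> d * q + x <> d * l + y.
Proof.
move=> y_in x_in; case: (ltngtP q l) => [lt_ql|lt_lq|->]; last by lia.
- have : d * q + d <= d * l by rewrite addnC -mulnS leq_mul2l lt_ql orbT.
  lia.
- have : d * l + d <= d * q by rewrite addnC -mulnS leq_mul2l lt_lq orbT.
  lia.
Qed.

Lemma theta'E s t : theta' s t = 2 * (t * s) - t.
Proof. by rewrite /theta' mulnBr muln1 mulnCA. Qed.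

Lemma imp_powE s t i l : imp_pow s t i l = theta' s t * l + (t * s - t + i).
Proof. by rewrite /imp_pow /theta' mulnBr muln1 mulnAC; lia. Qed.

Section ImportantPowers.

Variables s t : nat.
Hypothesis s_gt0 : 0 < s.

Let t_le_ts : t <= t * s := leq_pmulr t s_gt0.

Lemma imp_pow_lt i l : i < t -> l < t ->
  imp_pow s t i l < t * s + theta' s t * (t - 1).
Proof.
move=> lt_it lt_lt; have : theta' s t * l <= theta' s t * (t - 1).
  by rewrite leq_mul2l; apply/orP; right; lia.
by rewrite imp_powE; have := t_le_ts; lia.
Qed.

Lemma imp_pow_window i l q x : i < t -> t * s <= x -> x + 2 * t < 3 * (t * s) ->
  theta' s t * q + x <> imp_pow s t i l.
Proof.
move=> lt_it x_ge x_lt; rewrite imp_powE.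
apply: (window_neq (a := t * s - t) (b := t * s)); rewrite ?theta'E;
  by have := t_le_ts; lia.
Qed.

End ImportantPowers.

Lemma supp_CA (R : zmodType) m s t (A : 'M[R]_m) e : supp (CA s t A) e -> e < t * s.
Proof.
rewrite /supp /CA => /sumr_neq0 [[i lt_it] /sumr_neq0 [[j lt_js] /term_neq0 ->]] /=.
have : t * j.+1 <= t * s by rewrite leq_mul2l lt_js orbT.
lia.
Qed.

Lemma supp_CB (R : zmodType) m s t (B : 'M[R]_m) e : supp (CB s t B) e ->
  exists c q, e = c + theta' s t * q /\ c + t <= t * s.
Proof.
rewrite /supp /CB => /sumr_neq0 [[k lt_ks] /sumr_neq0 [[q _] /term_neq0 ->]] /=.
exists (t * (s - 1 - k)), q; split=> //.
by rewrite -mulnSr leq_mul2l; apply/orP; right; lia.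
Qed.

Section Supports.

Variables (s t z : nat).

Lemma pA_cases : pA s t z = t - 1 \/
  [/\ 0 < t * s - t, (z - 1) %/ (t * s - t) < t - 1
    & pA s t z = (z - 1) %/ (t * s - t)].
Proof.
rewrite /pA /minn; case: eqP => [_|/eqP D_neq0]; first by left.
by case: ltnP => [lt_q|_]; [right; split; rewrite ?lt0n | left].
Qed.

Lemma pB_cases : pB s t z = t - 1 \/ pB s t z = (z - 1) %/ (tau s t - z + 1).
Proof. by rewrite /pB /minn; case: ltnP; [right | left]. Qed.

Lemma supp_SA (U : zmodType) (Abar : nat -> U) e : supp (SA s t z Abar) e ->
  t * s + theta' s t * (t - 1) <= e \/
  exists q w, [/\ e = t * s + theta' s t * q + w, w + t < t * s & w < z].
Proof.
rewrite /supp /SA; case: ifP => [/and3P [lt_D_z _ _] | not_SA1].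
  rewrite /SA1 /=; case/addr_neq0.
    move=> /sumr_neq0 [[w lt_w] /sumr_neq0 [[q _] /term_neq0 ->]] /=.
    by right; exists q, w; split=> //; lia.
  move=> /sumr_neq0 [[u lt_u] /term_neq0 ->] /=.
  move: lt_u; rewrite -mulnA mulnBr muln1.
  case: pA_cases => [->|[D_gt0 _ ->]] lt_u; first by left; lia.
  have lt_uD := leq_trans lt_u (sub_divn_pred_leq z D_gt0).
  have lt_uz := leq_trans lt_u (leq_subr _ _).
  by right; exists ((z - 1) %/ (t * s - t)), u; split=> //; lia.
move=> /sumr_neq0 [[u lt_u] /term_neq0 ->] /=.
case: pA_cases => [->|[D_gt0 lt_q ->]]; first by left; lia.
have s_neq1 : s != 1 by apply: contraTneq D_gt0 => ->; rewrite muln1 subnn.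
have t_neq1 : t != 1 by apply: contraTneq lt_q => ->; rewrite subnn ltn0.
move: not_SA1; rewrite s_neq1 t_neq1 !andbT => /negbT; rewrite -leqNgt => z_le_D.
rewrite divn_small; last by lia.
by right; exists 0, u; split; rewrite ?muln0 ?addn0 //; lia.
Qed.

Lemma supp_SB (V : zmodType) (Bbar : nat -> V) e : 0 < s -> supp (SB s t z Bbar) e ->
  t * s + theta' s t * (t - 1) <= e \/
  exists q d, e = t * s + theta' s t * q + d /\ d + z + 2 * t <= t * s.
Proof.
move=> s_gt0; rewrite /supp /SB; case: ifP => [_ | /negbT].
  by move=> /sumr_neq0 [[r lt_r] /term_neq0 ->]; left; lia.
rewrite !negb_or -leqNgt => /and3P [z_le_tau s_neq1 _].
have two_t_le_ts : t * 2 <= t * s by rewrite leq_mul2l; apply/orP; right; lia.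
have tauE : tau s t = t * s - 2 * t by rewrite /tau theta'E; lia.
case: ifP => [lt_tau_2z | le_2z_tau].
  rewrite /SB2 /=; case/addr_neq0.
    move=> /sumr_neq0 [[d lt_d] /sumr_neq0 [[q _] /term_neq0 ->]] /=.
    by right; exists q, d; split=> //; lia.
  move=> /sumr_neq0 [[v lt_v] /term_neq0 ->] /=; move: lt_v.
  case: pB_cases => ->; first by left; lia.
  have D_gt0 : 0 < tau s t - z + 1 by rewrite addn1.
  move=> lt_v; have lt_vD := leq_trans lt_v (sub_divn_pred_leq z D_gt0).
  by right; exists ((z - 1) %/ (tau s t - z + 1)), v; split=> //; lia.
move=> /sumr_neq0 [[v lt_v] /term_neq0 ->] /=.
by right; exists 0, v; split; rewrite ?muln0 ?addn0 //; lia.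
Qed.

End Supports.

Section Conditions.

Variables (R U V : zmodType) (m s t z i l : nat).
Variables (A B : 'M[R]_m) (Abar : nat -> U) (Bbar : nat -> V).
Hypotheses (s_gt0 : 0 < s) (lt_it : i < t) (lt_lt : l < t).

Let imp_pow_lt_tail := imp_pow_lt s_gt0 lt_it lt_lt.
Let imp_pow_offset q x := @imp_pow_window s t s_gt0 i l q x lt_it.

Lemma imp_pow_notin_SA_CB :
  ~ sumset (supp (SA s t z Abar)) (supp (CB s t B)) (imp_pow s t i l).
Proof.
move=> [x [y [/supp_SA [x_big | [q [w [-> lt_wt lt_wz]]]]]]].
  by move=> _ sum_xy; move: imp_pow_lt_tail; lia.
move=> /supp_CB [c [q' [-> le_ct]]] sum_xy.
by apply: (imp_pow_offset (q := q + q') (x := t * s + w + c)); lia.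
Qed.

Lemma imp_pow_notin_SA_SB :
  ~ sumset (supp (SA s t z Abar)) (supp (SB s t z Bbar)) (imp_pow s t i l).
Proof.
move=> [x [y [/supp_SA [x_big | [q [w [-> lt_wt lt_wz]]]]]]].
  by move=> _ sum_xy; move: imp_pow_lt_tail; lia.
move=> /(supp_SB s_gt0) [y_big | [q' [d [-> le_dz]]]] sum_xy.
  by move: imp_pow_lt_tail; lia.
by apply: (imp_pow_offset (q := q + q') (x := 2 * (t * s) + w + d)); lia.
Qed.

Lemma imp_pow_notin_SB_CA :
  ~ sumset (supp (SB s t z Bbar)) (supp (CA s t A)) (imp_pow s t i l).
Proof.
move=> [x [y [/(supp_SB s_gt0) [x_big | [q [d [-> le_dz]]]]]]].
  by move=> _ sum_xy; move: imp_pow_lt_tail; lia.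
move=> /supp_CA lt_y sum_xy.
by apply: (imp_pow_offset (q := q) (x := t * s + d + y)); lia.
Qed.

End Conditions.

Theorem theorem1 (F : finFieldType) (m s t z : nat) (A B : 'M[F]_m)
  (Abar : nat -> 'M[F]_(m %/ t, m %/ s)) (Bbar : nat -> 'M[F]_(m %/ s, m %/ t)) :
  (0 < s)%N -> (0 < t)%N -> (s %| m)%N -> (t %| m)%N -> ~ (s = 1%N /\ t = 1%N) ->
  forall i l : nat, (i < t)%N -> (l < t)%N ->
  [/\ ~ sumset (supp (SA s t z Abar)) (supp (CB s t B)) (imp_pow s t i l),
      ~ sumset (supp (SA s t z Abar)) (supp (SB s t z Bbar)) (imp_pow s t i l) &
      ~ sumset (supp (SB s t z Bbar)) (supp (CA s t A)) (imp_pow s t i l)].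
Proof.
move=> s_gt0 _ _ _ _ i l lt_it lt_lt.
split; [exact: imp_pow_notin_SA_CB | exact: imp_pow_notin_SA_SB | exact: imp_pow_notin_SB_CA].
Qed.
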